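(* Let $S$ be an inverse semigroup that is a separately Scott-continuous mirror semigroup, with semilattice of idempotents $\Sigma$. Then for all $\epsilon,\delta\in\Sigma$, $\epsilon \prec\!\!\!\prec \delta$ if and only if $\epsilon\ll\delta$.
   Context: An inverse semigroup is a semigroup $S$ in which every $s$ has a unique $s^*$ with $ss^*s=s$ and $s^*ss^*=s^*$. $\Sigma=\Sigma(S)$ is the set of idempotents. The intrinsic order is $s\leqslant t$ iff $s=t\epsilon$ for some idempotent $\epsilon$. A subset is directed if nonempty and any two elements have an upper bound in it. $S$ is a mirror semigroup if every directed subset of $\Sigma$ having a supremum in $(\Sigma,\leqslant)$ also has a supremum in $(S,\leqslant)$. $S$ is separately Scott-continuous if for every directed $D\subseteq S$ with a supremum $\bigvee D$ in $S$ and every $s\in S$, $\bigvee(Ds)$ exists in $S$ and equals $(\bigvee D)s$. In a poset, $x$ is way-below $y$ if for every directed subset $D$ that has a supremum with $y\leqslant \sup D$, there is $d\in D$ with $x\leqslant d$. $\ll$ denotes the way-below relation of the poset $(S,\leqslant)$ and $\prec\!\!\!\prec$ the way-below relation of the poset $(\Sigma,\leqslant)$. *)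

Definition is_assoc {S : Type} (mul : S -> S -> S) : Prop :=
  forall x y z, mul x (mul y z) = mul (mul x y) z.

Definition inverse_semigroup_axiom {S : Type} (mul : S -> S -> S) : Prop :=
  forall s, exists! t, mul (mul s t) s = s /\ mul (mul t s) t = t.

Definition idem {S : Type} (mul : S -> S -> S) (e : S) : Prop := mul e e = e.

Definition ileq {S : Type} (mul : S -> S -> S) (s t : S) : Prop :=
  exists e, idem mul e /\ s = mul t e.

Definition directed {S : Type} (R : S -> S -> Prop) (D : S -> Prop) : Prop :=
  (exists x, D x) /\
  forall x y, D x -> D y -> exists z, D z /\ R x z /\ R y z.

Definition is_sup_in {S : Type} (P : S -> Prop) (R : S -> S -> Prop)
  (D : S -> Prop) (u : S) : Prop :=
  P u /\ (forall x, D x -> R x u) /\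
  (forall v, P v -> (forall x, D x -> R x v) -> R u v).

Definition everywhere {S : Type} : S -> Prop := fun _ => True.

Definition way_below_in {S : Type} (P : S -> Prop) (R : S -> S -> Prop)
  (x y : S) : Prop :=
  forall D : S -> Prop, (forall d, D d -> P d) -> directed R D ->
  forall u, is_sup_in P R D u -> R y u -> exists d, D d /\ R x d.

Definition mirror {S : Type} (mul : S -> S -> S) : Prop :=
  forall D : S -> Prop, (forall d, D d -> idem mul d) -> directed (ileq mul) D ->
  (exists u, is_sup_in (idem mul) (ileq mul) D u) ->
  exists v, is_sup_in everywhere (ileq mul) D v.

Definition sep_scott_continuous {S : Type} (mul : S -> S -> S) : Prop :=
  forall D : S -> Prop, directed (ileq mul) D ->
  forall d, is_sup_in everywhere (ileq mul) D d ->
  forall s, is_sup_in everywhere (ileq mul)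
              (fun y => exists x, D x /\ y = mul x s) (mul d s).

(* Since idempotents commute, the order ideal below an idempotent consists of
   idempotents.  For the forward direction, let a directed D have supremum u in S
   with d <= u, say d = u f for an idempotent f.  Right multiplication by f maps D
   to a directed set of idempotents whose supremum in S, hence in Sigma, is
   u f = d by separate Scott continuity; e is below some x f <= x.  Conversely,
   by the mirror property a directed set of idempotents with supremum u in Sigma
   has a supremum v in S, and v <= u forces v to be idempotent, so v = u. *)

From Stdlib Require Import Setoid.

Definition image_of {S : Type} (f : S -> S) (D : S -> Prop) : S -> Prop :=
  fun y => exists x, D x /\ y = f x.

Lemma directed_image {S : Type} (R : S -> S -> Prop) (f : S -> S) (D : S -> Prop) :
  (forall x y, R x y -> R (f x) (f y)) -> directed R D -> directed R (image_of f D).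
Proof.
  intros Hmono [[x0 Hx0] Hup]. split.
  - exists (f x0), x0. auto.
  - intros y1 y2 [x1 [Hx1 ->]] [x2 [Hx2 ->]].
    destruct (Hup x1 x2 Hx1 Hx2) as [z [Hz [Hxz1 Hxz2]]].
    exists (f z). split; [exists z; auto | auto].
Qed.

Lemma is_sup_in_restrict {S : Type} (P : S -> Prop) (R : S -> S -> Prop)
  (D : S -> Prop) (u : S) :
  is_sup_in everywhere R D u -> P u -> is_sup_in P R D u.
Proof.
  intros [_ [Hub Hlub]] Hu. repeat split; auto.
  intros v _ Hv. exact (Hlub v I Hv).
Qed.

Section InverseSemigroup.

Variable S : Type.
Variable mul : S -> S -> S.
Hypothesis Hassoc : is_assoc mul.
Hypothesis Hinv : inverse_semigroup_axiom mul.

Definition is_inverse (s t : S) : Prop :=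
  mul (mul s t) s = s /\ mul (mul t s) t = t.

Lemma is_inverse_uniq s t1 t2 : is_inverse s t1 -> is_inverse s t2 -> t1 = t2.
Proof.
  intros H1 H2. destruct (Hinv s) as [a [_ Huniq]].
  now rewrite <- (Huniq t1 H1), <- (Huniq t2 H2).
Qed.

Lemma mul_idemK e x : idem mul e -> mul (mul x e) e = mul x e.
Proof. intro He. now rewrite <- Hassoc, He. Qed.

Lemma idem_is_inverse e : idem mul e -> is_inverse e e.
Proof. intro He. unfold is_inverse. now rewrite !He. Qed.

(* With a the inverse of ef, fae is also an inverse of ef, so fae = a.  Since
   fae is idempotent, a is its own inverse; ef is an inverse of a, so ef = a. *)
Lemma idem_mul e f : idem mul e -> idem mul f -> idem mul (mul e f).
Proof.
  intros He Hf. destruct (Hinv (mul e f)) as [a [[Hefa Haef] Huniq]].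
  assert (Haef_r : forall x, mul (mul (mul (mul x a) e) f) a = mul x a).
  { intro x. transitivity (mul x (mul (mul a (mul e f)) a)).
    - now rewrite !Hassoc.
    - now rewrite Haef. }
  assert (Hfae : mul (mul f a) e = a).
  { symmetry. apply Huniq. split.
    - rewrite !Hassoc, (mul_idemK f e Hf), (mul_idemK e _ He).
      rewrite <- Hefa at 2. now rewrite !Hassoc.
    - now rewrite !Hassoc, (mul_idemK e _ He), (mul_idemK f _ Hf), Haef_r. }
  assert (Ha : idem mul a).
  { assert (Hsq : mul (mul (mul f a) e) (mul (mul f a) e) = mul (mul f a) e)
      by now rewrite !Hassoc, Haef_r.
    unfold idem. now rewrite Hfae in Hsq. }
  assert (Hefa_eq : mul e f = a).
  { apply (is_inverse_uniq a); [split; assumption | exact (idem_is_inverse a Ha)]. }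
  unfold idem. now rewrite Hefa_eq.
Qed.

Lemma idem_comm e f : idem mul e -> idem mul f -> mul e f = mul f e.
Proof.
  intros He Hf.
  pose proof (idem_mul e f He Hf) as Hef. pose proof (idem_mul f e Hf He) as Hfe.
  apply (is_inverse_uniq (mul e f)); [exact (idem_is_inverse _ Hef) | split].
  - rewrite !Hassoc, (mul_idemK f _ Hf), (mul_idemK e _ He).
    rewrite <- Hef at 2. now rewrite !Hassoc.
  - rewrite !Hassoc, (mul_idemK e _ He), (mul_idemK f _ Hf).
    rewrite <- Hfe at 2. now rewrite !Hassoc.
Qed.

Lemma ileq_refl_idem e : idem mul e -> ileq mul e e.
Proof. intro He. exists e. split; [exact He | symmetry; exact He]. Qed.

Lemma ileq_trans a b c : ileq mul a b -> ileq mul b c -> ileq mul a c.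
Proof.
  intros [g [Hg ->]] [h [Hh ->]]. exists (mul h g).
  split; [now apply idem_mul | now rewrite Hassoc].
Qed.

Lemma ileq_mulr x f : idem mul f -> ileq mul (mul x f) x.
Proof. intro Hf. exists f. split; [exact Hf | reflexivity]. Qed.

Lemma ileq_mul2r x y f : idem mul f -> ileq mul x y -> ileq mul (mul x f) (mul y f).
Proof.
  intros Hf [g [Hg ->]]. exists g. split; [exact Hg|].
  rewrite <- !Hassoc. now rewrite (idem_comm g f Hg Hf).
Qed.

Lemma idem_ileq x e : ileq mul x e -> idem mul e -> idem mul x.
Proof.
  intros [g [Hg ->]] He. unfold idem.
  rewrite <- (Hassoc e g (mul e g)), (Hassoc g e g), (idem_comm g e Hg He).
  now rewrite (mul_idemK g _ Hg), Hassoc, He.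
Qed.

Lemma way_below_of_way_below_idem e d :
  sep_scott_continuous mul -> idem mul d ->
  way_below_in (idem mul) (ileq mul) e d -> way_below_in everywhere (ileq mul) e d.
Proof.
  intros Hssc Hd Hwb D _ Hdir u Hsup [f [Hf Hdf]].
  pose proof (Hssc D Hdir u Hsup f) as HsupDf. rewrite <- Hdf in HsupDf.
  assert (HDf : forall y, image_of (fun x => mul x f) D y -> idem mul y).
  { intros y [x [Hx ->]]. apply (idem_ileq _ d); [|exact Hd].
    rewrite Hdf. apply ileq_mul2r; [exact Hf | exact (proj1 (proj2 Hsup) x Hx)]. }
  assert (Hdirf : directed (ileq mul) (image_of (fun x => mul x f) D)).
  { apply directed_image; [intros; now apply ileq_mul2r | exact Hdir]. }
  destruct (Hwb _ HDf Hdirf d (is_sup_in_restrict _ _ _ _ HsupDf Hd)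
              (ileq_refl_idem d Hd)) as [y [[x [Hx ->]] Hexf]].
  exists x. split; [exact Hx | exact (ileq_trans _ _ _ Hexf (ileq_mulr x f Hf))].
Qed.

Lemma way_below_idem_of_way_below e d :
  mirror mul ->
  way_below_in everywhere (ileq mul) e d -> way_below_in (idem mul) (ileq mul) e d.
Proof.
  intros Hmirror Hwb D HDidem Hdir u Hsup Hdu.
  destruct (Hmirror D HDidem Hdir (ex_intro _ u Hsup)) as [v Hv].
  destruct Hsup as [Hu [Hub Hlub]]. destruct Hv as [_ [Hvub Hvlub]].
  assert (Hvu : ileq mul v u) by exact (Hvlub u I Hub).
  assert (Huv : ileq mul u v) by exact (Hlub v (idem_ileq v u Hvu Hu) Hvub).
  apply (Hwb D (fun _ _ => I) Hdir v); [repeat split; auto | exact (ileq_trans _ _ _ Hdu Huv)].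
Qed.

End InverseSemigroup.

Theorem corollary4p5 (S : Type) (mul : S -> S -> S)
  (Hassoc : is_assoc mul) (Hinv : inverse_semigroup_axiom mul)
  (Hmirror : mirror mul) (Hssc : sep_scott_continuous mul) :
  forall e d : S, idem mul e -> idem mul d ->
    (way_below_in (idem mul) (ileq mul) e d <->
     way_below_in everywhere (ileq mul) e d).
Proof.
  intros e d _ Hd. split.
  - exact (way_below_of_way_below_idem S mul Hassoc Hinv e d Hssc Hd).
  - exact (way_below_idem_of_way_below S mul Hassoc Hinv e d Hmirror).
Qed.
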